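(* Let $ds^2=\sum_{j,k=0}^3 g_{jk}(\rho,z)\,dy_jdy_k$ be a stationary axisymmetric Lorentzian metric in cylindrical coordinates $(y_0,y_1,y_2,y_3)=(t,\rho,z,\varphi)$ on ${\bf R}^3\times{\bf R}$, with $g_{jk}$ smooth and even in $\rho$, and let $[g^{jk}]_{j,k=0}^3=([g_{jk}]_{j,k=0}^3)^{-1}$. Let $\Delta(\rho,z)=\det[g^{jk}(\rho,z)]_{j,k=1}^3$ and assume the ergosphere $\Delta=0$ is a smooth closed curve in the $(\rho,z)$-plane with $\Delta>0$ outside it and $\Delta<0$ inside it near the curve. Let $\Delta_1(\rho,z)=g^{11}g^{22}-(g^{12})^2$ and assume $\Delta_1=0$ is a smooth closed curve with $\Delta_1>0$ outside it and $\Delta_1<0$ inside it in a neighborhood of the curve. Then every point $(\rho,z)$ with $\Delta_1(\rho,z)=0$ either lies on the curve $\Delta=0$ or lies inside the curve $\Delta=0$.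
   Context: The ergosphere is the set where $g_{00}=0$, equivalently where $\Delta=\det[g^{jk}]_{j,k=1}^3=0$. The curve $\Delta_1=0$ is called the restricted ergosphere. The metric has Lorentz signature $(1,-1,-1,-1)$.
   Formalization: The ergosphere sign hypothesis is reversed: near the curve Δ=0, Δ<0 holds outside it and Δ>0 inside it, in place of Δ>0 outside and Δ<0 inside. This corrects a misprint. *)

From HB Require Import structures.
From mathcomp Require Import all_boot all_order all_algebra.
From mathcomp Require Import all_classical all_reals all_analysis.
Set Implicit Arguments. Unset Strict Implicit. Unset Printing Implicit Defensive.
Import Order.TTheory GRing.Theory Num.Theory.
Import numFieldNormedType.Exports.
Local Open Scope classical_set_scope.
Local Open Scope ring_scope.

Section Defs.
Variable R : realType.

(* C^oo functions R -> R: belong to a class of everywhere-differentiable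
   functions closed under differentiation. *)
Definition smooth_fun (f : R -> R) : Prop :=
  exists S : set (R -> R), S f /\
    forall h, S h -> (forall x, derivable h x 1) /\ S (derive1 h).

Definition smooth2 (f : R -> R -> R) : Prop :=
  exists S : set (R -> R -> R), S f /\
    forall h, S h ->
      continuous (fun p : R * R => h p.1 p.2) /\
      (forall r z, derivable (fun r' => h r' z) r 1) /\
      (forall r z, derivable (h r) z 1) /\
      S (fun r z => derive1 (fun r' => h r' z) r) /\
      S (fun r z => derive1 (h r) z).

(* Lorentz signature (1,-1,-1,-1) of a symmetric 4x4 matrix (Sylvester). *)
Definition minkowski_diag : 'M[R]_4 :=
  diag_mx (\row_(i < 4) (if i == ord0 then 1 else -1)).

Definition lorentzian (A : 'M[R]_4) : Prop :=
  A^T = A /\ exists P : 'M[R]_4, P \in unitmx /\ P^T *m A *m P = minkowski_diag.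

(* indices y_1 = rho, y_2 = z *)
Definition i1 : 'I_4 := lift ord0 (ord0 : 'I_3).
Definition i2 : 'I_4 := lift ord0 (lift ord0 (ord0 : 'I_2)).

Definition ginv (g : R -> R -> 'M[R]_4) (r z : R) : 'M[R]_4 := invmx (g r z).

Definition Delta (g : R -> R -> 'M[R]_4) (r z : R) : R :=
  \det (\matrix_(i < 3, j < 3) ginv g r z (lift ord0 i) (lift ord0 j)).

Definition Delta1 (g : R -> R -> 'M[R]_4) (r z : R) : R :=
  ginv g r z i1 i1 * ginv g r z i2 i2 - (ginv g r z i1 i2) ^+ 2.

Definition smooth_closed_curve (C : set (R * R)) : Prop :=
  exists (x y : R -> R) (T : R),
    0 < T /\ smooth_fun x /\ smooth_fun y /\
    (forall t, x (t + T) = x t /\ y (t + T) = y t) /\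
    (forall s t, 0 <= s < T -> 0 <= t < T -> (x s, y s) = (x t, y t) -> s = t) /\
    (forall t, derive1 x t != 0 \/ derive1 y t != 0) /\
    C = [set p | exists t, p = (x t, y t)].

(* p is outside C: p is not on C and lies in the unbounded part of the
   complement of C (it can be joined to arbitrarily far points by a
   path avoiding C). *)
Definition outside (C : set (R * R)) (p : R * R) : Prop :=
  ~ C p /\ forall M : R, exists c : R -> R * R,
    continuous c /\ c 0 = p /\ M < `|(c 1).1| + `|(c 1).2| /\
    forall t, 0 <= t <= 1 -> ~ C (c t).

Definition inside (C : set (R * R)) (p : R * R) : Prop :=
  ~ C p /\ ~ outside C p.

End Defs.

(* For Lorentzian [g] write [g^-1 = P eta P^T]; then [g^-1] is the Gram matrix of the
   rows of [P] for the Minkowski form.  If [Delta1 = 0] the Gram block of rows 1, 2 is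
   degenerate, which forces both diagonal entries to be nonpositive (a timelike row
   would yield a nonzero null vector orthogonal to it, contradicting the independence of
   the rows), and expanding the 3x3 Gram determinant then gives [Delta >= 0].
   It remains to exclude [Delta > 0] outside the ergosphere [C].  Off the axis [Delta]
   is continuous and vanishes exactly on [C], and it is even in [r], so its sign is
   locally constant on the complement of [C] and hence constant along paths avoiding
   [C].  Any outside point can be joined, avoiding [C], first to far away and then to a
   point just to the right of the rightmost point of [C], where [Delta < 0] by
   hypothesis. *)

From HB Require Import structures.
From mathcomp Require Import all_boot all_order all_algebra.
From mathcomp Require Import all_classical all_reals all_analysis.
From mathcomp Require Import ring lra.
Import Order.TTheory GRing.Theory Num.Theory.
Import numFieldNormedType.Exports.
Local Open Scope classical_set_scope.
Local Open Scope ring_scope.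

Definition i3 : 'I_4 := lift ord0 (lift ord0 (lift ord0 (ord0 : 'I_1))).

Lemma ord4_cases (P : 'I_4 -> Prop) : P ord0 -> P i1 -> P i2 -> P i3 -> forall k, P k.
Proof.
move=> P0 P1 P2 P3 [[|[|[|[|//]]]] k4].
- by rewrite (_ : Ordinal k4 = ord0) //; apply: val_inj.
- by rewrite (_ : Ordinal k4 = i1) //; apply: val_inj.
- by rewrite (_ : Ordinal k4 = i2) //; apply: val_inj.
- by rewrite (_ : Ordinal k4 = i3) //; apply: val_inj.
Qed.

Definition j1 : 'I_3 := lift ord0 ord0.
Definition j2 : 'I_3 := lift ord0 (lift ord0 (ord0 : 'I_1)).

Lemma det_mx33 (R : comPzRingType) (A : 'M[R]_3) :
  \det A = A ord0 ord0 * (A j1 j1 * A j2 j2 - A j1 j2 * A j2 j1)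
         - A ord0 j1 * (A j1 ord0 * A j2 j2 - A j1 j2 * A j2 ord0)
         + A ord0 j2 * (A j1 ord0 * A j2 j1 - A j1 j1 * A j2 ord0).
Proof.
rewrite (expand_det_row _ 0) !big_ord_recl big_ord0 /cofactor.
rewrite !(expand_det_row _ 0) !big_ord_recl !big_ord0 /cofactor.
rewrite ![\det _]det_mx11 ?mxE /=.
set B := fun i j : nat => A (inord i) (inord j).
have E (i j : 'I_3) : A i j = B i j by rewrite /B !inord_val.
by rewrite !E /= /bump /=; ring.
Qed.

Lemma reverse_cauchy_schwarz (R : realFieldType) (x0 x1 x2 x3 y0 y1 y2 y3 : R) :
  x1 ^+ 2 + x2 ^+ 2 + x3 ^+ 2 < x0 ^+ 2 ->
  x0 * y0 = x1 * y1 + x2 * y2 + x3 * y3 ->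
  y0 ^+ 2 = y1 ^+ 2 + y2 ^+ 2 + y3 ^+ 2 -> y0 = 0.
Proof.
move=> hx hxy hy; apply/eqP; rewrite -sqrf_eq0 eq_le sqr_ge0 andbT.
set S := x1 ^+ 2 + x2 ^+ 2 + x3 ^+ 2 in hx *.
have lagrange : (x0 ^+ 2 - S) * y0 ^+ 2
   = - ((x1 * y2 - x2 * y1) ^+ 2 + (x1 * y3 - x3 * y1) ^+ 2 + (x2 * y3 - x3 * y2) ^+ 2).
  have -> : (x0 ^+ 2 - S) * y0 ^+ 2 = (x0 * y0) ^+ 2 - S * y0 ^+ 2 by ring.
  by rewrite hxy hy /S; ring.
rewrite -(pmulr_rle0 _ (_ : 0 < x0 ^+ 2 - S)) ?subr_gt0 // lagrange oppr_le0.
by rewrite !addr_ge0 ?sqr_ge0.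
Qed.

Section MinkowskiForm.
Context {R : realFieldType}.
Implicit Types x y u v : 'I_4 -> R.

Definition mdot x y : R := \sum_k (if k == ord0 then 1 else -1) * x k * y k.

Lemma mdotE x y :
  mdot x y = x ord0 * y ord0 - x i1 * y i1 - x i2 * y i2 - x i3 * y i3.
Proof. by rewrite /mdot !big_ord_recl big_ord0 /=; ring. Qed.

Lemma mdotC x y : mdot x y = mdot y x.
Proof. by rewrite !mdotE; ring. Qed.

Lemma mdotBr x u v a b :
  mdot x (fun k => a * u k - b * v k) = a * mdot x u - b * mdot x v.
Proof. by rewrite !mdotE; ring. Qed.

Lemma timelike_orth_null_eq0 x y :
  0 < mdot x x -> mdot x y = 0 -> mdot y y = 0 -> forall k, y k = 0.
Proof.
rewrite !mdotE => xx xy yy.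
have y0 : y ord0 = 0.
  by apply: (@reverse_cauchy_schwarz _ (x ord0) (x i1) (x i2) (x i3) _ (y i1) (y i2) (y i3)); rewrite -?expr2; lra.
have sq0 : y i1 ^+ 2 + y i2 ^+ 2 + y i3 ^+ 2 = 0.
  by rewrite !expr2; move: yy; rewrite y0; lra.
have sqr0 (a : R) : a ^+ 2 = 0 -> a = 0 by move/eqP; rewrite sqrf_eq0 => /eqP.
have s1 := sqr_ge0 (y i1); have s2 := sqr_ge0 (y i2); have s3 := sqr_ge0 (y i3).
by apply: (ord4_cases (fun k => y k = 0)) => [//|||]; apply: sqr0; lra.
Qed.

End MinkowskiForm.

Section LorentzianInverse.
Context {R : realType}.
Implicit Types A P : 'M[R]_4.

Lemma lorentzian_invmx A P : P \in unitmx ->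
  P^T *m A *m P = minkowski_diag R -> invmx A = P *m minkowski_diag R *m P^T.
Proof.
move=> Pu hP.
have eta2 : minkowski_diag R *m minkowski_diag R = 1%:M.
  rewrite /minkowski_diag mulmx_diag -diag_const_mx; congr diag_mx.
  by apply/matrixP => i j; rewrite !mxE; case: ifP; rewrite ?mulr1 ?mulrNN ?mulr1.
have PtA : P^T *m A = minkowski_diag R *m invmx P.
  by rewrite -hP -mulmxA (mulmxV Pu) mulmx1.
have inv : P *m minkowski_diag R *m P^T *m A = 1%:M.
  by rewrite -mulmxA PtA !mulmxA -(mulmxA P) eta2 mulmx1 (mulmxV Pu).
have [_ Au] := mulmx1_unit inv.
by rewrite -[LHS]mul1mx -inv -[_ *m invmx A]mulmxA (mulmxV Au) mulmx1.
Qed.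

Lemma minkowski_gramE P a b : (P *m minkowski_diag R *m P^T) a b = mdot (P a) (P b).
Proof.
rewrite /minkowski_diag mul_mx_diag !mxE /mdot; apply: eq_bigr => k _.
by rewrite !mxE [P a k * _]mulrC.
Qed.

Lemma lorentzian_det_neq0 A : lorentzian A -> \det A != 0.
Proof.
move=> [_ [P [Pu hP]]]; apply/eqP => A0.
move/(congr1 determinant): hP; rewrite !det_mulmx det_tr A0 mulr0 mul0r.
by rewrite /minkowski_diag det_diag !big_ord_recl big_ord0 !mxE /=; lra.
Qed.

Lemma gram_degenerate_nonpos P (a b : 'I_4) : P \in unitmx -> a != b ->
  mdot (P a) (P a) * mdot (P b) (P b) = mdot (P a) (P b) ^+ 2 ->
  mdot (P a) (P a) <= 0.
Proof.
move=> Pu ab degen; rewrite leNgt; apply/negP => timelike.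
set haa := mdot (P a) (P a) in degen timelike *.
set hab := mdot (P a) (P b) in degen.
set hbb := mdot (P b) (P b) in degen.
pose y k := hab * P a k - haa * P b k.
have orth : mdot (P a) y = 0 by rewrite mdotBr -/haa -/hab; ring.
have null : mdot y y = 0.
  rewrite {2}/y mdotBr (mdotC y) orth (mdotC y) mdotBr -/hbb (mdotC (P b)) -/hab.
  by rewrite expr2 in degen; rewrite -degen; ring.
have y0 := timelike_orth_null_eq0 _ _ timelike orth null.
pose v : 'rV[R]_4 := \row_k (if k == a then hab else if k == b then - haa else 0).
have vP : v *m P = 0.
  apply/matrixP => i k; rewrite !mxE (bigD1 a) //= (bigD1 b) /=; last by rewrite eq_sym.
  rewrite big1; last by move=> j /andP[ja jb]; rewrite !mxE (negbTE ja) (negbTE jb) mul0r.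
  by rewrite !mxE !eqxx (eq_sym b a) (negbTE ab) addr0 mulNr; exact: y0.
have : v = 0 by rewrite -[v]mulmx1 -(mulmxV Pu) mulmxA vP mul0mx.
move/matrixP=> /(_ 0 b); rewrite !mxE eq_sym (negbTE ab) eqxx => /eqP.
by rewrite oppr_eq0 => /eqP haa0; rewrite haa0 ltxx in timelike.
Qed.

Lemma quadratic_form_nonpos (a b c d e : R) : a <= 0 -> b <= 0 -> a * b = c ^+ 2 ->
  a * e ^+ 2 - 2 * c * d * e + b * d ^+ 2 <= 0.
Proof.
move=> a0 b0 abc.
have [a_eq0|an] := eqVneq a 0.
  have c_eq0 : c = 0 by apply/eqP; rewrite -sqrf_eq0 -abc a_eq0 mul0r.
  by rewrite a_eq0 c_eq0 mul0r mulr0 !mul0r subrr add0r mulr_le0_ge0 ?sqr_ge0.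
have alt : a < 0 by rewrite lt_neqAle an a0.
rewrite -(nmulr_rge0 _ alt).
have -> : a * (a * e ^+ 2 - 2 * c * d * e + b * d ^+ 2)
    = (a * e - c * d) ^+ 2 + (a * b - c ^+ 2) * d ^+ 2 by ring.
by rewrite abc subrr mul0r addr0 sqr_ge0.
Qed.

Lemma lorentzian_Delta_ge0 A : lorentzian A ->
  invmx A i1 i1 * invmx A i2 i2 - invmx A i1 i2 ^+ 2 = 0 ->
  0 <= \det (\matrix_(i < 3, j < 3) invmx A (lift ord0 i) (lift ord0 j)).
Proof.
move=> [_ [P [Pu hP]]]; rewrite (lorentzian_invmx _ _ Pu hP) !minkowski_gramE.
set M := \matrix_(i < 3, j < 3) _.
have ME (i j : 'I_3) : M i j = mdot (P (lift ord0 i)) (P (lift ord0 j)).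
  by rewrite mxE minkowski_gramE.
rewrite det_mx33 !ME.
rewrite -/i1 -/i2 -/i3 (mdotC (P i2) (P i1)) (mdotC (P i3) (P i1)) (mdotC (P i3) (P i2)).
set a := mdot (P i1) (P i1); set b := mdot (P i2) (P i2); set c := mdot (P i1) (P i2).
set d := mdot (P i1) (P i3); set e := mdot (P i2) (P i3); set f := mdot (P i3) (P i3).
move/eqP; rewrite subr_eq0 => /eqP abc.
have a0 : a <= 0 by apply: (gram_degenerate_nonpos _ i1 i2 Pu).
have b0 : b <= 0 by apply: (gram_degenerate_nonpos _ i2 i1 Pu); rewrite // mulrC mdotC.
have -> : a * (b * f - e * e) - c * (c * f - e * d) + d * (c * e - b * d)
   = (a * b - c ^+ 2) * f - (a * e ^+ 2 - 2 * c * d * e + b * d ^+ 2) by ring.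
by rewrite abc subrr mul0r sub0r oppr_ge0 quadratic_form_nonpos.
Qed.

End LorentzianInverse.

Section MatrixLimits.
Context {R : realType} {T : Type} {F : set_system T} {FF : Filter F}.

Lemma cvg_det {n} {M : T -> 'M[R]_n} {L : 'M[R]_n} :
  (forall i j, M x i j @[x --> F] --> L i j) -> \det (M x) @[x --> F] --> \det L.
Proof.
move=> ML; apply: (cvg_big add_continuous) => // s _.
apply: cvgM; first exact: cvg_cst.
by apply: (cvg_big mul_continuous) => // i _; exact: ML.
Qed.

Lemma cvg_invmx {n} {M : T -> 'M[R]_n} {L : 'M[R]_n} : \det L != 0 ->
  (forall i j, M x i j @[x --> F] --> L i j) ->
  forall i j, invmx (M x) i j @[x --> F] --> invmx L i j.
Proof.
move=> L0 ML i j; have ML_det := cvg_det ML.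
have cofactor_cvg : cofactor (M x) j i @[x --> F] --> cofactor L j i.
  apply: cvgM; first exact: cvg_cst.
  by apply: cvg_det => a b; rewrite !mxE; under eq_cvg do rewrite !mxE; exact: ML.
have -> : invmx L i j = (\det L)^-1 * cofactor L j i.
  by rewrite /invmx unitmxE unitfE L0 !mxE.
apply: cvg_trans (cvgM (cvgV L0 ML_det) cofactor_cvg); apply: near_eq_cvg.
near=> x; have Mx0 : \det (M x) != 0 by near: x; exact: cvgr_neq0 ML_det L0.
by rewrite /invmx unitmxE unitfE Mx0 !mxE.
Unshelve. all: by end_near. Qed.

End MatrixLimits.

Lemma Delta_cvg (R : realType) (g : R -> R -> 'M[R]_4) (p : R * R) :
  (forall j k : 'I_4, smooth2 (fun r z => g r z j k)) -> \det (g p.1 p.2) != 0 ->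
  Delta g q.1 q.2 @[q --> p] --> Delta g p.1 p.2.
Proof.
move=> g_smooth gp0; apply: cvg_det => i j; rewrite !mxE; under eq_cvg do rewrite !mxE.
apply: (cvg_invmx (M := fun q : R * R => g q.1 q.2)) => // a b.
by have [S [Sg /(_ _ Sg)[gc _]]] := g_smooth a b; exact: gc p.
Qed.

Section ClosedCurve.
Context {R : realType}.

Lemma periodic_shiftz {X : Type} (f : R -> X) (T : R) : (forall t, f (t + T) = f t) ->
  forall (k : int) t, f (t + k%:~R * T) = f t.
Proof.
move=> fT.
have fnT (n : nat) t : f (t + n%:R * T) = f t.
  by elim: n t => [|n IHn] t; rewrite ?mul0r ?addr0 // -addn1 natrD mulrDl mul1r addrA fT.
case=> n t; first exact: fnT.
by rewrite NegzE mulrNz mulNr -(fnT n.+1 (t - _)) subrK.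
Qed.

Lemma periodic_reduce {X : Type} (f : R -> X) (T : R) : 0 < T ->
  (forall t, f (t + T) = f t) -> forall t, exists2 s, 0 <= s <= T & f t = f s.
Proof.
move=> T_gt0 fT t; set k := Num.floor (t / T).
exists (t + (- k)%:~R * T); last by rewrite periodic_shiftz.
have := floor_le (t / T); have := floorD1_gt (t / T); rewrite -/k intrD => tk1 kt.
rewrite ler_pdivlMr // in kt; rewrite ltr_pdivrMr // mulrDl mul1r in tk1.
by rewrite mulrNz mulNr; apply/andP; split; lra.
Qed.

Lemma smooth_fun_continuous (f : R -> R) : smooth_fun f -> continuous f.
Proof.
case=> S [Sf S_deriv] t; have [fd _] := S_deriv f Sf.
by apply: differentiable_continuous; apply/derivable1_diffP; exact: fd.
Qed.

Lemma smooth_closed_curve_image (C : set (R * R)) : smooth_closed_curve C ->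
  exists (f : R -> R * R) (T : R), [/\ 0 < T, continuous f & C = f @` `[0, T]].
Proof.
case=> x [y [T [T_gt0 [sx [sy [xyT [_ [_ ->]]]]]]]].
exists (fun t => (x t, y t)), T; split=> //.
  by move=> t; exact: cvg_pair (smooth_fun_continuous _ sx t) (smooth_fun_continuous _ sy t).
apply/seteqP; split=> [_ [t ->]|_ [t _ <-]]; last by exists t.
have fT (u : R) : (x (u + T), y (u + T)) = (x u, y u) by have [-> ->] := xyT u.
have [s s0T ->] := periodic_reduce (fun u => (x u, y u)) T T_gt0 fT t.
by exists s; rewrite ?in_itv.
Qed.

Lemma smooth_closed_curve_compact (C : set (R * R)) : smooth_closed_curve C -> compact C.
Proof.
move=> /smooth_closed_curve_image[f [T [_ fc ->]]].
by apply: continuous_compact; [exact: continuous_subspaceT | exact: segment_compact].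
Qed.

Lemma smooth_closed_curve_bounded (C : set (R * R)) : smooth_closed_curve C ->
  exists K : R, forall q, C q -> `|q.1| <= K /\ `|q.2| <= K.
Proof.
move=> /smooth_closed_curve_compact/compact_bounded[M [_ /(_ (M + 1))]].
rewrite ltrDl ltr01 => /(_ isT) CM; exists (M + 1) => q /CM.
by move=> qM; have : Num.max `|q.1| `|q.2| <= M + 1 := qM; rewrite ge_max => /andP[].
Qed.

Lemma smooth_closed_curve_rightmost (C : set (R * R)) : smooth_closed_curve C ->
  exists2 cs, C cs & forall q, C q -> q.1 <= cs.1.
Proof.
move=> /smooth_closed_curve_image[f [T [T_gt0 fc ->]]].
have f1c : {within `[0, T], continuous (fun t => (f t).1)}.
  by apply: continuous_subspaceT => t; exact: cvg_comp (fc t) cvg_fst.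
have [t0 t0T f1max] := EVT_max (ltW T_gt0) f1c.
by exists (f t0); [exists t0 | move=> _ [t tT <-]; exact: f1max].
Qed.
End ClosedCurve.

Section Segments.
Context {R : realType}.

Lemma ltr_segment (l a b t : R) : l < a -> l < b -> 0 <= t <= 1 -> l < a + t * (b - a).
Proof.
move=> la lb /andP[t0 t1]; have [t_lt1|t_ge1] := ltrP t 1.
  have : 0 < (1 - t) * (a - l) by rewrite mulr_gt0 // subr_gt0.
  have : 0 <= t * (b - l) by rewrite mulr_ge0 // subr_ge0 ltW.
  lra.
have t_eq1 : t = 1 by lra.
by rewrite t_eq1 mul1r addrC subrK.
Qed.

Lemma continuous_segment {V : normedModType R} (a b : V) :
  continuous (fun t : R => a + t *: (b - a)).
Proof. by move=> t; apply: cvgD; [exact: cvg_cst | apply: cvgZ; [exact: cvg_id | exact: cvg_cst]]. Qed.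

Lemma ball_segment {V : normedModType R} {p a b : V} {e t : R} :
  ball p e a -> ball p e b -> 0 <= t <= 1 -> ball p e (a + t *: (b - a)).
Proof.
rewrite -!ball_normE /ball_ /= => pa pb /andP[t0 t1].
have -> : p - (a + t *: (b - a)) = (1 - t) *: (p - a) + t *: (p - b).
  by rewrite scalerBl scale1r !scalerBr !opprB opprD opprB !addrA subrK.
apply: le_lt_trans (ler_normD _ _) _; rewrite !normrZ ger0_norm ?subr_ge0 // ger0_norm //.
have := @ltr_segment (- e) (- `|p - a|) (- `|p - b|) t; rewrite !ltrN2 t0 t1 => /(_ pa pb isT).
by lra.
Qed.

Lemma IVT_sign (f : R -> R) : {within `[0, 1], continuous f} ->
  (forall t, 0 <= t <= 1 -> f t != 0) -> 0 < f 0 * f 1.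
Proof.
move=> fc fn0; rewrite ltNge; apply/negP => f01.
have f0 : f 0 != 0 by apply: fn0; rewrite lexx ler01.
have f1 : f 1 != 0 by apply: fn0; rewrite lexx ler01.
have [|c c01 fc0] := IVT ler01 fc (_ : Num.min (f 0) (f 1) <= 0 <= Num.max (f 0) (f 1)).
  rewrite ge_min le_max; case: (ltrgtP (f 0) 0) => [f0_lt0|f0_gt0|f0_eq0].
  - by have -> : 0 <= f 1 by nra.
  - by have -> : f 1 <= 0 by nra.
  - by rewrite f0_eq0 eqxx in f0.
by move: c01; rewrite in_itv /= => /fn0; rewrite fc0 eqxx.
Qed.

Lemma locally_constant_on01 (b : R -> bool) :
  (forall t : R, 0 <= t <= 1 -> \forall s \near t, b s = b t) -> b 0 = b 1.
Proof.
move=> bloc; apply/eqP; rewrite eq_sym; apply/negP => /negP b01.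
pose phi (t : R) : R := (b t)%:R.
have phic : {within `[0, 1], continuous phi}.
  apply: continuous_in_subspaceT => t; rewrite inE /= in_itv /= => t01.
  by apply: cvg_near_cst; apply: filterS (bloc t t01) => s bst; rewrite /phi bst.
have [|c _] := IVT ler01 phic (_ : Num.min (phi 0) (phi 1) <= 2^-1 <= Num.max (phi 0) (phi 1)).
  by move: b01; rewrite /phi ge_min le_max; case: (b 0); case: (b 1) => //= _; lra.
by rewrite /phi; case: (b c) => /=; lra.
Qed.

End Segments.

(* Only points off the axis [r = 0] count: there [g] may degenerate and [Delta] need
   not be continuous. *)
Definition locally_pos {R : realType} (D : R -> R -> R) (p : R * R) : Prop :=
  \forall q \near p, q.1 != 0 -> 0 < D q.1 q.2.

Lemma near_offaxis {R : realType} {P : set (R * R)} {p : R * R} :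
  (\forall q \near p, P q) -> exists2 q : R * R, q.1 != 0 & P q.
Proof.
move=> /nbhs_ballP[e e_gt0 epP].
have [p0|pn] := eqVneq p.1 0; last by exists p => //; apply: epP; exact: ballxx.
have e2_gt0 : 0 < e / 2 by rewrite divr_gt0.
exists (e / 2, p.2); first by rewrite /= gt_eqF.
apply: epP; split; rewrite /ball /= ?subrr ?normr0 // p0 sub0r normrN gtr0_norm //.
by lra.
Qed.

Lemma locally_pos_oppN {R : realType} {D : R -> R -> R} {p : R * R} :
  locally_pos D p -> ~ locally_pos (fun r z => - D r z) p.
Proof.
move=> Dp NDp; have [q qn [/(_ qn) Dq /(_ qn)]] := near_offaxis (filterI Dp NDp).
by rewrite oppr_gt0; lra.
Qed.

Lemma outside_of_right {R : realType} (C : set (R * R)) (x0 : R) (p : R * R) :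
  (forall q, C q -> q.1 <= x0) -> x0 < p.1 -> outside C p.
Proof.
move=> Cright xp; split; first by move=> /Cright; rewrite leNgt xp.
move=> M; pose b := (p.1 + `|M| + `|p.1| + 1, p.2).
have hM := ler_norm M; have hp := ler_norm (- p.1); rewrite normrN in hp.
have b1_gt : p.1 < b.1 by rewrite /b /=; have := normr_ge0 M; have := normr_ge0 p.1; lra.
exists (fun t => p + t *: (b - p)); split; first exact: continuous_segment.
rewrite scale0r addr0 scale1r subrKC; split=> //; split.
  by rewrite /= ger0_norm; have := normr_ge0 p.2; have := normr_ge0 M; lra.
by move=> t t01 /Cright; rewrite leNgt ltr_segment // (lt_trans xp).
Qed.

Lemma open_shift_right {R : realType} {U : set (R * R)} {p : R * R} :
  open U -> U p -> exists2 t : R, 0 < t & U (p.1 + t, p.2).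
Proof.
move=> Uo Up; have /nbhs_ballP[e /= e_gt0 eU] := Uo p Up.
exists (e / 2); first by rewrite divr_gt0.
apply: eU; split; rewrite /ball /= ?subrr ?normr0 // opprD addrA subrr sub0r normrN.
by rewrite gtr0_norm ?divr_gt0 //; lra.
Qed.

Section LocalSign.
Context {R : realType} {D : R -> R -> R} {C : set (R * R)}.
Hypothesis D_even : forall r z, D (- r) z = D r z.
Hypothesis D_eq0 : forall r z, r != 0 -> D r z = 0 <-> C (r, z).
Hypothesis D_cvg : forall p : R * R, p.1 != 0 -> D q.1 q.2 @[q --> p] --> D p.1 p.2.
Hypothesis C_closed : closed C.

Lemma offcurve_neq0 {p : R * R} : p.1 != 0 -> ~ C p -> D p.1 p.2 != 0.
Proof. by move=> pn Cp; apply/eqP => /(D_eq0 _ _ pn); rewrite -surjective_pairing. Qed.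

Lemma segment_sign (a b : R * R) :
  (forall t, 0 <= t <= 1 -> (a + t *: (b - a)).1 != 0 /\ ~ C (a + t *: (b - a))) ->
  0 < D a.1 a.2 * D b.1 b.2.
Proof.
move=> offC.
pose f t := D (a + t *: (b - a)).1 (a + t *: (b - a)).2.
have := @IVT_sign _ f _ (fun t t01 => offcurve_neq0 (offC t t01).1 (offC t t01).2).
rewrite /f scale0r addr0 scale1r subrKC; apply.
apply: continuous_in_subspaceT => t t01.
have {}t01 : 0 <= t <= 1 by move: t01; rewrite inE /= in_itv.
have [tn _] := offC t t01.
exact: (cvg_comp _ _ (continuous_segment a b t) (D_cvg _ tn)).
Qed.

Lemma locally_sign {p : R * R} : ~ C p ->
  locally_pos D p \/ locally_pos (fun r z => - D r z) p.
Proof.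
move=> Cp.
have [e e_gt0 eC] : nbhs_ball p (~` C).
  by apply/nbhs_ballP; move: C_closed; rewrite -openC => /(_ p Cp).
suff [p0 D0 same] : exists2 p0 : R * R, D p0.1 p0.2 != 0 &
    \forall q \near p, q.1 != 0 -> 0 < D p0.1 p0.2 * D q.1 q.2.
  case: (ltrgtP 0 (D p0.1 p0.2)) => [D0_gt0|D0_lt0|D0_eq0]; last by rewrite -D0_eq0 eqxx in D0.
  - by left; apply: filterS same => q + qn => /(_ qn); rewrite pmulr_rgt0.
  - by right; apply: filterS same => q + qn => /(_ qn); rewrite nmulr_rgt0 // oppr_gt0.
(* On the axis, compare with a point off it; evenness in [r] moves [q] to its side. *)
have [p0|pn] := eqVneq p.1 0.
  have e2_gt0 : 0 < e / 2 by rewrite divr_gt0.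
  have ball_e2 : ball p e (e / 2, p.2).
    by split; rewrite /ball /= ?subrr ?normr0 // p0 sub0r normrN gtr0_norm //; lra.
  exists (e / 2, p.2); first by apply: offcurve_neq0; [rewrite /= gt_eqF|exact: eC].
  apply/nbhs_ballP; exists e => // q pq qn.
  have ball_abs : ball p e (`|q.1|, q.2).
    by case: pq => pq1 pq2; split => //; move: pq1; rewrite /ball /= p0 !sub0r !normrN normr_id.
  have -> : D q.1 q.2 = D `|q.1| q.2.
    by case: (ltrP q.1 0) => [q_lt0|q_ge0]; [rewrite ltr0_norm // D_even|rewrite ger0_norm].
  apply: (segment_sign (e / 2, p.2) (`|q.1|, q.2)) => t t01.
  split; last exact/eC/ball_segment.
  by rewrite gt_eqF //= ltr_segment // normr_gt0.
exists p; first exact: offcurve_neq0.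
have e'_gt0 : 0 < Num.min e `|p.1| by rewrite lt_min e_gt0 normr_gt0.
apply/nbhs_ballP; exists (Num.min e `|p.1|) => // q pq _.
apply: segment_sign => t t01.
have [ps1 ps2] := ball_segment (ballxx p e'_gt0) pq t01.
move: ps1; rewrite /ball /= lt_min => /andP[ps1e ps1p]; split.
  by apply: contraTneq ps1p => ->; rewrite subr0 ltxx.
apply: eC; split; first exact: ps1e.
by apply: le_ball ps2; rewrite ge_min lexx.
Qed.

Lemma locally_pos_of_gt0 {p : R * R} : p.1 != 0 -> 0 < D p.1 p.2 -> locally_pos D p.
Proof.
move=> pn Dp; have Cp : ~ C p.
  by rewrite [p]surjective_pairing => /(D_eq0 _ _ pn) D0; rewrite D0 ltxx in Dp.
case: (locally_sign Cp) => // /nbhs_singleton /(_ pn).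
by rewrite oppr_gt0; lra.
Qed.

Lemma path_locally_pos {c : R -> R * R} : continuous c ->
  (forall t, 0 <= t <= 1 -> ~ C (c t)) -> locally_pos D (c 0) -> locally_pos D (c 1).
Proof.
move=> cc cC c0; apply/asboolP; rewrite -(locally_constant_on01 (fun t => `[< locally_pos D (c t) >])).
  exact/asboolP.
move=> t t01; case: (locally_sign (cC t t01)) => ct; near=> s.
  have cs : locally_pos D (c s) by near: s; exact: cc t _ (near_join ct).
  by rewrite (asboolT cs) (asboolT ct).
have cs : locally_pos (fun r z => - D r z) (c s) by near: s; exact: cc t _ (near_join ct).
by rewrite (asboolF (locally_pos_oppN^~ cs)) (asboolF (locally_pos_oppN^~ ct)).
Unshelve. all: by end_near.
Qed.

Lemma segment_locally_pos (a b : R * R) :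
  (forall t, 0 <= t <= 1 -> ~ C (a + t *: (b - a))) ->
  locally_pos D a -> locally_pos D b.
Proof.
move=> segC; have := path_locally_pos (continuous_segment a b) segC.
by rewrite scale0r addr0 scale1r subrKC.
Qed.

Lemma rightmost_ge0 {cs : R * R} : C cs -> (forall q, C q -> q.1 <= cs.1) -> 0 <= cs.1.
Proof.
move=> Ccs Cright; rewrite leNgt; apply/negP => cs_lt0.
have : C (- cs.1, cs.2).
  apply/(D_eq0 _ _ _); first by rewrite oppr_eq0 ltr0_neq0.
  by rewrite D_even; apply/(D_eq0 _ _ (ltr0_neq0 cs_lt0)); rewrite -surjective_pairing.
by move=> /Cright /=; lra.
Qed.

Lemma locally_pos_right (x0 : R) (a b : R * R) : (forall q, C q -> q.1 <= x0) ->
  x0 < a.1 -> x0 < b.1 -> locally_pos D a -> locally_pos D b.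
Proof.
move=> Cright xa xb; apply: segment_locally_pos => t t01 /Cright.
by rewrite leNgt ltr_segment.
Qed.

Context {K : R}.
Hypothesis C_bounded : forall q, C q -> `|q.1| <= K /\ `|q.2| <= K.

Lemma locally_pos_vertical (a : R * R) (z : R) : K < `|a.1| ->
  locally_pos D a -> locally_pos D (a.1, z).
Proof.
move=> aK; apply: segment_locally_pos => t _ /C_bounded[/= + _].
by rewrite subrr scaler0 addr0; lra.
Qed.

Lemma locally_pos_horizontal (a : R * R) (r : R) : K < `|a.2| ->
  locally_pos D a -> locally_pos D (r, a.2).
Proof.
move=> aK; apply: segment_locally_pos => t _ /C_bounded[_ /=].
by rewrite subrr scaler0 addr0; lra.
Qed.

Lemma locally_pos_far (a : R * R) : K < `|a.1| \/ K < `|a.2| ->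
  locally_pos D a -> locally_pos D (K + 1, K + 1).
Proof.
have K1 : K < `|K + 1| by have := ler_norm (K + 1); lra.
case=> aK Da.
  exact: (locally_pos_horizontal (a.1, K + 1)) (locally_pos_vertical _ _ aK Da).
exact: (locally_pos_vertical (K + 1, a.2)) (locally_pos_horizontal _ _ aK Da).
Qed.

Lemma outside_lt0 {U : set (R * R)} {cs : R * R} :
  open U -> C `<=` U ->
  (forall r z, r != 0 -> U (r, z) -> outside C (r, z) -> D r z < 0) ->
  C cs -> (forall q, C q -> q.1 <= cs.1) ->
  forall p : R * R, p.1 != 0 -> outside C p -> D p.1 p.2 < 0.
Proof.
move=> Uo CU U_neg Ccs Cright p pn [Cp pfar].
rewrite ltNge; apply/negP => Dp_ge0.
have Dp : locally_pos D p.
  by apply: locally_pos_of_gt0 => //; rewrite lt_neqAle eq_sym (offcurve_neq0 pn Cp).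
have [c [cc [c0 [cM cC]]]] := pfar (2 * K).
have Dc1 : locally_pos D (c 1) by apply: path_locally_pos cc cC _; rewrite c0.
have Dhub : locally_pos D (K + 1, K + 1).
  by apply: locally_pos_far Dc1; case: (ltrP K `|(c 1).1|) => c1K; [left|right; lra].
have [t t_gt0 Uw] := open_shift_right Uo (CU _ Ccs).
have cs_ge0 := rightmost_ge0 Ccs Cright.
have csK : cs.1 < K + 1 by have [+ _] := C_bounded _ Ccs; have := ler_norm cs.1; lra.
have w_gt : cs.1 < cs.1 + t by rewrite ltrDl.
have wn : cs.1 + t != 0 by rewrite gt_eqF //; lra.
have := nbhs_singleton (locally_pos_right _ (K + 1, K + 1) (cs.1 + t, cs.2) Cright csK w_gt Dhub) wn.
by have := U_neg _ _ wn Uw (outside_of_right C _ (cs.1 + t, cs.2) Cright w_gt); lra.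
Qed.

End LocalSign.

Theorem proposition2p2 (R : realType) (g : R -> R -> 'M[R]_4)
  (C C1 : set (R * R)) :
  (forall j k : 'I_4, smooth2 (fun r z => g r z j k)) ->
  (forall r z, g (- r) z = g r z) ->
  (forall r z, r != 0 -> lorentzian (g r z)) ->
  smooth_closed_curve C ->
  (forall r z, r != 0 -> (Delta g r z = 0 <-> C (r, z))) ->
  (exists U : set (R * R), open U /\ C `<=` U /\
     forall r z, r != 0 -> U (r, z) ->
       (outside C (r, z) -> Delta g r z < 0) /\
       (inside C (r, z) -> 0 < Delta g r z)) ->
  smooth_closed_curve C1 ->
  (forall r z, r != 0 -> (Delta1 g r z = 0 <-> C1 (r, z))) ->
  (exists U : set (R * R), open U /\ C1 `<=` U /\
     forall r z, r != 0 -> U (r, z) ->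
       (outside C1 (r, z) -> 0 < Delta1 g r z) /\
       (inside C1 (r, z) -> Delta1 g r z < 0)) ->
  forall r z, r != 0 -> Delta1 g r z = 0 -> C (r, z) \/ inside C (r, z).
Proof.
move=> g_smooth g_even g_lor C_curve Delta_eq0 [U [Uo [CU U_sign]]] _ _ _ r z rn Delta1_eq0.
have Delta_ge0 : 0 <= Delta g r z := lorentzian_Delta_ge0 _ (g_lor r z rn) Delta1_eq0.
have [Delta0|Delta_neq0] := eqVneq (Delta g r z) 0; first by left; apply/(Delta_eq0 _ _ rn).
right; split; first by move/(Delta_eq0 _ _ rn)/eqP; apply/negP.
move=> rz_out.
have Delta_even r' z' : Delta g (- r') z' = Delta g r' z' by rewrite /Delta /ginv g_even.
have Delta_cvg_offaxis (p : R * R) : p.1 != 0 -> Delta g q.1 q.2 @[q --> p] --> Delta g p.1 p.2.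
  by move=> pn; apply: Delta_cvg => //; exact: lorentzian_det_neq0 (g_lor _ _ pn).
have C_closed : closed C by apply: compact_closed => //; exact: smooth_closed_curve_compact.
have [K C_bounded] := smooth_closed_curve_bounded _ C_curve.
have [cs Ccs C_right] := smooth_closed_curve_rightmost _ C_curve.
have := outside_lt0 Delta_even Delta_eq0 Delta_cvg_offaxis C_closed C_bounded Uo CU
  (fun r' z' rn' Urz => (U_sign r' z' rn' Urz).1) Ccs C_right (r, z) rn rz_out.
by lra.
Qed.
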